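(* Let $G=(V,E)$ be a directed graph on $n$ vertices in which every vertex has at least one out-neighbor, accessible only through Jump and RandomCrawl queries, let $\alpha\in(0,1)$ be a fixed constant (the teleportation probability), and let $1\le \Delta\le n$. Then the running time (number of queries plus all computation) of the algorithm ApproximatePageRank described below, run on $G$ with threshold $\Delta$, is at most $\tilde{O}(n/\Delta)$, where $\tilde{O}$ hides factors polylogarithmic in $n$ and the dependence on $\alpha$ is ignored.
   Context: Query model: a Jump query takes no input and returns a vertex of $G$ chosen uniformly at random; a RandomCrawl query takes a vertex $v$ and returns an out-neighbor of $v$ chosen uniformly at random. All logarithms are base 2. Subroutine ApproxRow$(v,\epsilon,\rho)$ (with $0<\epsilon,\rho<1$): set $\ell=\log_{1/(1-\alpha)}(4/\epsilon)$ and $r=16\log(n)/(\epsilon\rho^2)$. Repeat $r$ times: run a walk starting at $v$ in which at each step, with probability $\alpha$ the walk makes a termination step (and stops), and with probability $1-\alpha$ it moves to RandomCrawl of its current vertex; the walk is artificially stopped after $\ell$ steps if it has not terminated. If the walk made a termination step while at vertex $u$, add 1 to a counter of $u$ (stored in a binary search tree keyed by vertex identity). Output every vertex with a nonzero counter together with its counter divided by $r$ (its estimated value). Algorithm ApproximatePageRank (input $\Delta$): maintain a binary search tree ChunkTree of counters keyed by pairs (vertex, scale). For $t=0,1,\dots,\log(4n/\Delta)$: set $\epsilon_t=2^{-t}$; repeat $4\,\epsilon_t (n/\Delta)\log^2(n)$ times: Jump to a random vertex $v$, call ApproxRow$(v,\epsilon_t/2,1/2)$, and for each vertex $j$ in the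 returned list (whose estimated value lies in the chunk of scale $\epsilon_t$, i.e. in $[\epsilon_t,2\epsilon_t)$) add 1 to the counter with key $(j,\epsilon_t)$, creating it with value 1 if absent. Second part: for every key $(j,\epsilon)$ in ChunkTree whose counter value is at least $\tfrac12\log n$, add $\frac{\Delta}{2\epsilon\log^2(n)}$ to an accumulator of $j$ (stored in a binary search tree keyed by vertex). Finally output every vertex whose accumulator is at least $\Delta/4$, together with its accumulated value. *)

From Stdlib Require Import Reals Lra Lia List Arith.
Import ListNotations.
Open Scope R_scope.

Definition lg (x : R) : R := ln x / ln 2.

Definition floorR (x : R) : nat := Z.to_nat (Int_part x).
Definition ceilR (x : R) : nat := Z.to_nat (- Int_part (- x)).

(** A randomized program interacting with the graph oracle. Vertices are the
    naturals 0..n-1.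
    - [Jump k]      : Jump query (cost 1), answer is a vertex.
    - [Crawl v k]   : RandomCrawl query at v (cost 1), answer an out-neighbor.
    - [Flip k]      : a random coin (cost 1); [true] = termination step
                      (taken with probability alpha).
    - [Tick c k]    : c units of internal computation. *)
Inductive Comp (A : Type) : Type :=
| Ret (a : A)
| Jump (k : nat -> Comp A)
| Crawl (v : nat) (k : nat -> Comp A)
| Flip (k : bool -> Comp A)
| Tick (c : nat) (k : Comp A).
Arguments Ret {A} a.
Arguments Jump {A} k.
Arguments Crawl {A} v k.
Arguments Flip {A} k.
Arguments Tick {A} c k.

Fixpoint bind {A B} (m : Comp A) (f : A -> Comp B) : Comp B :=
  match m with
  | Ret a => f a
  | Jump k => Jump (fun v => bind (k v) f)
  | Crawl v k => Crawl v (fun u => bind (k u) f)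
  | Flip k => Flip (fun b => bind (k b) f)
  | Tick c k => Tick c (bind k f)
  end.

(** Every possible outcome
    of the random choices is allowed, so bounding all executions is a
    worst-case running-time bound. *)
Inductive exec (n : nat) (adj : nat -> nat -> Prop) {A : Type}
  : Comp A -> nat -> A -> Prop :=
| ex_ret a : exec n adj (Ret a) 0 a
| ex_jump k v c a : (v < n)%nat -> exec n adj (k v) c a ->
    exec n adj (Jump k) (S c) a
| ex_crawl v k u c a : adj v u -> exec n adj (k u) c a ->
    exec n adj (Crawl v k) (S c) a
| ex_flip k b c a : exec n adj (k b) c a -> exec n adj (Flip k) (S c) a
| ex_tick m k c a : exec n adj k c a -> exec n adj (Tick m k) (m + c) a.

Fixpoint repeatM {S} (m : nat) (body : S -> Comp S) (s : S) : Comp S :=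
  match m with
  | O => Ret s
  | S m' => Tick 1 (bind (body s) (repeatM m' body))
  end.

Fixpoint forList {S X} (l : list X) (body : X -> S -> Comp S) (s : S)
  : Comp S :=
  match l with
  | [] => Ret s
  | x :: l' => Tick 1 (bind (body x s) (forList l' body))
  end.

(** * Binary search trees, modelled as association lists; each
    lookup/insert/update on a tree with m keys costs log2 m + 1
    (balanced BST). *)
Definition bst_cost (m : nat) : nat := (Nat.log2 m + 1)%nat.

Fixpoint upd {K V} (eqK : K -> K -> bool) (k : K) (f : option V -> V)
  (l : list (K * V)) : list (K * V) :=
  match l with
  | [] => [(k, f None)]
  | (k', v) :: l' => if eqK k k' then (k', f (Some v)) :: l'
                     else (k', v) :: upd eqK k f l'
  end.

Definition bst_update {K V} (eqK : K -> K -> bool) (k : K) (f : option V -> V)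
  (l : list (K * V)) : Comp (list (K * V)) :=
  Tick (bst_cost (length l)) (Ret (upd eqK k f l)).

Definition incr (o : option nat) : nat :=
  match o with None => 1%nat | Some c => S c end.

Definition addv (x : R) (o : option R) : R :=
  match o with None => x | Some y => y + x end.

Definition pair_eqb (a b : nat * nat) : bool :=
  Nat.eqb (fst a) (fst b) && Nat.eqb (snd a) (snd b).

Fixpoint walk (l : nat) (u : nat) : Comp (option nat) :=
  match l with
  | O => Ret None
  | S l' => Flip (fun b => if b then Ret (Some u)
                           else Crawl u (fun w => walk l' w))
  end.

Definition approx_row (alpha : R) (n : nat) (v : nat) (eps rho : R)
  : Comp (list (nat * R)) :=
  let l := ceilR (ln (4 / eps) / ln (1 / (1 - alpha))) in
  let r := ceilR (16 * lg (INR n) / (eps * rho ^ 2)) in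
  bind (repeatM r (fun cnt =>
          bind (walk l v) (fun res =>
            match res with
            | None => Ret cnt
            | Some u => bst_update Nat.eqb u incr cnt
            end)) [])
       (fun cnt =>
          Tick (length cnt)
            (Ret (map (fun p => (fst p, INR (snd p) / INR r)) cnt))).

Definition eps_t (t : nat) : R := (/ 2) ^ t.

Definition first_part (alpha : R) (n : nat) (Delta : R)
  : Comp (list ((nat * nat) * nat)) :=
  let T := floorR (lg (4 * INR n / Delta)) in
  forList (seq 0 (S T)) (fun t chunk =>
    let e := eps_t t in
    let reps := ceilR (4 * e * (INR n / Delta) * (lg (INR n)) ^ 2) in
    repeatM reps (fun chunk =>
      Jump (fun v =>
        bind (approx_row alpha n v (e / 2) (1 / 2)) (fun L =>
          forList L (fun jv chunk =>
            if Rle_dec e (snd jv) then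
              if Rlt_dec (snd jv) (2 * e) then
                bst_update pair_eqb (fst jv, t) incr chunk
              else Ret chunk
            else Ret chunk) chunk))) chunk) [].

Definition approximate_pagerank (alpha : R) (n : nat) (Delta : R)
  : Comp (list (nat * R)) :=
  bind (first_part alpha n Delta) (fun chunk =>
  bind (forList chunk (fun kc acc =>
          let '((j, t), c) := kc in
          if Rle_dec (lg (INR n) / 2) (INR c) then
            bst_update Nat.eqb j
              (addv (Delta / (2 * eps_t t * (lg (INR n)) ^ 2))) acc
          else Ret acc) []) (fun acc =>
  forList acc (fun ja out =>
    if Rle_dec (Delta / 4) (snd ja) then Ret (ja :: out) else Ret out) [])).

From Stdlib Require Import Reals Lra Lia List ZArith.
Import ListNotations.
Open Scope R_scope.

(** At scale [t <= T = floor (lg (4n/Delta)) <= lg n + 2] the algorithm makes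
    about [2^-t (n/Delta) log^2 n] calls of ApproxRow, each running about
    [2^t log n] walks of length [O(log n)]: the factors [2^-t] and [2^t] cancel,
    so each of the [O(log n)] scales costs [O((n/Delta) polylog n)]. All trees
    keep polynomially many keys, so each tree operation costs [O(log n)]. *)

Section CostModel.
Variable n : nat.
Variable adj : nat -> nat -> Prop.

Lemma exec_ret_inv {A} (a : A) c b :
  exec n adj (Ret a) c b -> c = 0%nat /\ b = a.
Proof. intros H; inversion H; auto. Qed.

Lemma exec_tick_inv {A} m (k : Comp A) c b :
  exec n adj (Tick m k) c b -> exists c', exec n adj k c' b /\ c = (m + c')%nat.
Proof. intros H; inversion H; subst; eauto. Qed.

Lemma exec_bind_inv {A B} (m : Comp A) (f : A -> Comp B) c b :
  exec n adj (bind m f) c b ->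
  exists c1 a c2, exec n adj m c1 a /\ exec n adj (f a) c2 b /\ c = (c1 + c2)%nat.
Proof.
  revert c b; induction m as [a|k IH|v k IH|k IH|m k IH]; simpl; intros c b H.
  - exists 0%nat, a, c; repeat split; auto; constructor.
  - inversion H as [|? ? ? ? Hv Hk| | |]; subst.
    destruct (IH _ _ _ Hk) as (c1 & a & c2 & H1 & H2 & ->).
    exists (S c1), a, c2; split; [eapply ex_jump; eauto | split; [auto | lia]].
  - inversion H as [| |? ? ? ? ? Hvu Hk| |]; subst.
    destruct (IH _ _ _ Hk) as (c1 & a & c2 & H1 & H2 & ->).
    exists (S c1), a, c2; split; [eapply ex_crawl; eauto | split; [auto | lia]].
  - inversion H as [| | |? ? ? ? Hk|]; subst.
    destruct (IH _ _ _ Hk) as (c1 & a & c2 & H1 & H2 & ->).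
    exists (S c1), a, c2; split; [eapply ex_flip; eauto | split; [auto | lia]].
  - apply exec_tick_inv in H as (c' & Hk & ->).
    destruct (IH _ _ Hk) as (c1 & a & c2 & H1 & H2 & ->).
    exists (m + c1)%nat, a, c2; split; [constructor; auto | split; [auto | lia]].
Qed.

Lemma walk_cost_le l u c a : exec n adj (walk l u) c a -> (c <= 2 * l)%nat.
Proof.
  revert u c a; induction l as [|l IHl]; simpl; intros u c a H.
  - apply exec_ret_inv in H; lia.
  - inversion H as [| | |k b c' a' Hb|]; subst; destruct b.
    + apply exec_ret_inv in Hb; lia.
    + inversion Hb as [| |? ? ? ? ? _ Hw| |]; subst.
      apply IHl in Hw; lia.
Qed.

Lemma length_upd_le {K V} eqK k (f : option V -> V) (l : list (K * V)) :
  (length (upd eqK k f l) <= S (length l))%nat.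
Proof.
  induction l as [|[k' v] l IH]; simpl; [lia|].
  destruct (eqK k k'); simpl; lia.
Qed.

Lemma bst_update_cost {K V} eqK k (f : option V -> V) (l : list (K * V)) c l' :
  exec n adj (bst_update eqK k f l) c l' ->
  c = bst_cost (length l) /\ (length l' <= S (length l))%nat.
Proof.
  intros H; apply exec_tick_inv in H as (c' & H & ->).
  apply exec_ret_inv in H as [-> ->].
  split; [lia | apply length_upd_le].
Qed.

Lemma bst_cost_mono a b : (a <= b)%nat -> (bst_cost a <= bst_cost b)%nat.
Proof. intros Hab; unfold bst_cost; pose proof (Nat.log2_le_mono a b Hab); lia. Qed.

(** Loops are bounded through a size measure [f] on the state that grows by at
    most [d] per iteration and stays below [K], so that each iteration can be
    charged a cost [B] depending only on [K]. *)
Lemma repeatM_cost {S} (f : S -> nat) (body : S -> Comp S) K d B :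
  (forall s c s', (f s + d <= K)%nat -> exec n adj (body s) c s' ->
     (c <= B)%nat /\ (f s' <= f s + d)%nat) ->
  forall r s c s', (f s + r * d <= K)%nat -> exec n adj (repeatM r body s) c s' ->
     (c <= r * (1 + B))%nat /\ (f s' <= f s + r * d)%nat.
Proof.
  intros Hbody r; induction r as [|r IHr]; simpl; intros s c s' HK H.
  - apply exec_ret_inv in H as [-> ->]; lia.
  - apply exec_tick_inv in H as (c' & H & ->).
    apply exec_bind_inv in H as (c1 & s1 & c2 & H1 & H2 & ->).
    destruct (Hbody s c1 s1) as [Hc1 Hf1]; [lia | exact H1 |].
    destruct (IHr s1 c2 s') as [Hc2 Hf2]; [nia | exact H2 |].
    nia.
Qed.

Lemma forList_cost {S X} (f : S -> nat) (body : X -> S -> Comp S) K d B l :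
  (forall x s c s', In x l -> (f s + d <= K)%nat -> exec n adj (body x s) c s' ->
     (c <= B)%nat /\ (f s' <= f s + d)%nat) ->
  forall s c s', (f s + length l * d <= K)%nat -> exec n adj (forList l body s) c s' ->
     (c <= length l * (1 + B))%nat /\ (f s' <= f s + length l * d)%nat.
Proof.
  induction l as [|x l IHl]; simpl; intros Hbody s c s' HK H.
  - apply exec_ret_inv in H as [-> ->]; lia.
  - apply exec_tick_inv in H as (c' & H & ->).
    apply exec_bind_inv in H as (c1 & s1 & c2 & H1 & H2 & ->).
    destruct (Hbody x s c1 s1) as [Hc1 Hf1]; [left; auto | lia | exact H1 |].
    destruct (IHl (fun y s0 c0 s0' Hy => Hbody y s0 c0 s0' (or_intror Hy)) s1 c2 s') as [Hc2 Hf2];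
      [nia | exact H2 |].
    nia.
Qed.

Lemma approx_row_cost alpha v eps rho m c L :
  let l := ceilR (ln (4 / eps) / ln (1 / (1 - alpha))) in
  let r := ceilR (16 * lg (INR n) / (eps * rho ^ 2)) in
  (r <= m)%nat -> exec n adj (approx_row alpha n v eps rho) c L ->
  (c <= r * (2 + 2 * l + bst_cost m))%nat /\ (length L <= r)%nat.
Proof.
  intros l r Hrm H; unfold approx_row in H; fold l r in H.
  apply exec_bind_inv in H as (c1 & cnt & c2 & H1 & H2 & ->).
  apply exec_tick_inv in H2 as (c' & H2 & ->).
  apply exec_ret_inv in H2 as [-> ->]; rewrite length_map.
  eapply (repeatM_cost (@length (nat * nat)) _ m 1 (2 * l + bst_cost m))
    in H1 as [Hc Hl]; [simpl in Hl; nia | | simpl; lia].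
  intros s c s' Hs Hx.
  apply exec_bind_inv in Hx as (d1 & res & d2 & G1 & G2 & ->).
  apply walk_cost_le in G1; destruct res as [u|].
  - apply bst_update_cost in G2 as [-> Hlen].
    pose proof (bst_cost_mono (length s) m ltac:(lia)); lia.
  - apply exec_ret_inv in G2 as [-> ->]; lia.
Qed.

End CostModel.

Definition max_upto (f : nat -> nat) (T : nat) : nat :=
  fold_right Nat.max 0%nat (map f (seq 0 (S T))).

Lemma le_max_upto f T t : (t <= T)%nat -> (f t <= max_upto f T)%nat.
Proof.
  intros Ht; unfold max_upto.
  assert (Hin : In t (seq 0 (S T))) by (apply in_seq; lia).
  induction (seq 0 (S T)) as [|x l IH]; simpl in *; [tauto|].
  destruct Hin as [-> | Hin]; [lia | specialize (IH Hin); lia].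
Qed.

Definition last_scale (n : nat) (Delta : R) : nat := floorR (lg (4 * INR n / Delta)).
Definition reps_at (n : nat) (Delta : R) (t : nat) : nat :=
  ceilR (4 * eps_t t * (INR n / Delta) * lg (INR n) ^ 2).
Definition walks_at (n : nat) (t : nat) : nat :=
  ceilR (16 * lg (INR n) / (eps_t t / 2 * (1 / 2) ^ 2)).
Definition walk_len_at (alpha : R) (t : nat) : nat :=
  ceilR (ln (4 / (eps_t t / 2)) / ln (1 / (1 - alpha))).

Definition chunk_bound (n : nat) (Delta : R) : nat :=
  (S (last_scale n Delta)
   * max_upto (fun t => reps_at n Delta t * walks_at n t) (last_scale n Delta))%nat.

(** Cost of one walk of ApproxRow together with the handling of the list entry
    it may produce. *)
Definition step_cost (alpha : R) (n : nat) (Delta : R) : nat :=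
  (3 + 2 * max_upto (walk_len_at alpha) (last_scale n Delta)
   + bst_cost (max_upto (walks_at n) (last_scale n Delta))
   + bst_cost (chunk_bound n Delta))%nat.

Definition pagerank_cost (alpha : R) (n : nat) (Delta : R) : nat :=
  let T := last_scale n Delta in
  let K := chunk_bound n Delta in
  (S T * (1 + (2 * max_upto (reps_at n Delta) T
               + max_upto (fun t => reps_at n Delta t * walks_at n t) T
                 * step_cost alpha n Delta))
   + K * (1 + bst_cost K) + K)%nat.

Definition sample_step (alpha : R) (n t : nat) (chunk : list ((nat * nat) * nat))
  : Comp (list ((nat * nat) * nat)) :=
  Jump (fun v =>
    bind (approx_row alpha n v (eps_t t / 2) (1 / 2)) (fun L =>
      forList L (fun jv chunk =>
        if Rle_dec (eps_t t) (snd jv) then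
          if Rlt_dec (snd jv) (2 * eps_t t) then
            bst_update pair_eqb (fst jv, t) incr chunk
          else Ret chunk
        else Ret chunk) chunk)).

Section PageRankCost.
Variable n : nat.
Variable adj : nat -> nat -> Prop.
Variables alpha Delta : R.

Let T := last_scale n Delta.
Let K := chunk_bound n Delta.
Let Z := step_cost alpha n Delta.
Let P := max_upto (fun t => reps_at n Delta t * walks_at n t)%nat T.

Lemma sample_cost t chunk c chunk' :
  (t <= T)%nat -> (length chunk + walks_at n t <= K)%nat ->
  exec n adj (sample_step alpha n t chunk) c chunk' ->
  (c <= 1 + walks_at n t * Z)%nat
  /\ (length chunk' <= length chunk + walks_at n t)%nat.
Proof.
  intros Ht HK Hx.
  inversion Hx as [|k v c' a _ Hv| | |]; subst.
  apply exec_bind_inv in Hv as (d1 & L & d2 & G1 & G2 & ->).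
  eapply approx_row_cost with (m := max_upto (walks_at n) T) in G1 as [Gc Gl];
    [| apply (le_max_upto (walks_at n)); exact Ht].
  fold (walks_at n t) (walk_len_at alpha t) in Gc, Gl.
  eapply (forList_cost n adj (@length ((nat * nat) * nat)) _ K 1 (bst_cost K))
    in G2 as [Gc2 Gl2]; [| | lia].
  - assert (walk_len_at alpha t <= max_upto (walk_len_at alpha) T)%nat
      by (apply le_max_upto; exact Ht).
    unfold Z, step_cost; fold T K; split; nia.
  - intros [j x] s c1 s' _ Hs Hz; simpl in Hz.
    destruct (Rle_dec (eps_t t) x); [destruct (Rlt_dec x (2 * eps_t t))|].
    + apply bst_update_cost in Hz as [-> Hlen].
      split; [apply bst_cost_mono | ]; lia.
    + apply exec_ret_inv in Hz as [-> ->]; lia.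
    + apply exec_ret_inv in Hz as [-> ->]; lia.
Qed.

Lemma first_part_cost c chunk :
  exec n adj (first_part alpha n Delta) c chunk ->
  (c <= S T * (1 + (2 * max_upto (reps_at n Delta) T + P * Z)))%nat
  /\ (length chunk <= K)%nat.
Proof.
  unfold first_part; cbv zeta.
  change (floorR (lg (4 * INR n / Delta))) with T; intros H.
  eapply (forList_cost n adj (@length ((nat * nat) * nat)) _ K P
            (2 * max_upto (reps_at n Delta) T + P * Z)) in H as [Hc Hl].
  - rewrite length_seq in Hc, Hl; simpl in Hl.
    split; [exact Hc | unfold K, chunk_bound; fold T P; lia].
  - intros t s c' s' Hin Hs Hx; apply in_seq in Hin.
    assert (Ht : (t <= T)%nat) by lia.
    assert (HP : (reps_at n Delta t * walks_at n t <= P)%nat)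
      by (apply (le_max_upto (fun t => reps_at n Delta t * walks_at n t)%nat); exact Ht).
    assert (Hreps : (reps_at n Delta t <= max_upto (reps_at n Delta) T)%nat)
      by (apply le_max_upto; exact Ht).
    fold (reps_at n Delta t) in Hx.
    eapply (repeatM_cost n adj (@length ((nat * nat) * nat)) _ K (walks_at n t)
              (1 + walks_at n t * Z)) in Hx as [Hc Hl].
    + split; [|nia].
      assert (reps_at n Delta t * walks_at n t * Z <= P * Z)%nat
        by (apply Nat.mul_le_mono_r; exact HP).
      nia.
    + intros s0 c0 s0' Hs0 Hy; exact (sample_cost t s0 c0 s0' Ht Hs0 Hy).
    + nia.
  - rewrite length_seq; simpl; unfold K, chunk_bound; fold T P; lia.
Qed.

Lemma pagerank_cost_correct c out :
  exec n adj (approximate_pagerank alpha n Delta) c out ->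
  (c <= pagerank_cost alpha n Delta)%nat.
Proof.
  unfold approximate_pagerank, pagerank_cost; cbv zeta; fold T K Z P; intros H.
  apply exec_bind_inv in H as (c1 & chunk & c2 & H1 & H2 & ->).
  apply first_part_cost in H1 as [Hc1 Hl1].
  apply exec_bind_inv in H2 as (c3 & acc & c4 & H2 & H3 & ->).
  eapply (forList_cost n adj (@length (nat * R)) _ K 1 (bst_cost K)) in H2 as [Hc2 Hl2];
    [| | simpl; lia].
  - eapply (forList_cost n adj (fun _ : list (nat * R) => 0%nat) _ 0 0 0) in H3 as [Hc3 _];
      [simpl in Hl2; nia | | lia].
    intros [j a] s c s' _ _ Hz; simpl in Hz.
    destruct (Rle_dec (Delta / 4) a); apply exec_ret_inv in Hz as [-> ->]; lia.
  - intros [[j t] cc] s c s' _ Hs Hz; simpl in Hz.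
    destruct (Rle_dec (lg (INR n) / 2) (INR cc)).
    + apply bst_update_cost in Hz as [-> Hlen]; split; [apply bst_cost_mono |]; lia.
    + apply exec_ret_inv in Hz as [-> ->]; lia.
Qed.

End PageRankCost.

Lemma INR_Z_to_nat z : INR (Z.to_nat z) = Rmax 0 (IZR z).
Proof.
  destruct (Z_le_gt_dec 0 z).
  - rewrite INR_IZR_INZ, Z2Nat.id by lia.
    rewrite Rmax_right; auto; apply IZR_le; lia.
  - replace (Z.to_nat z) with 0%nat by lia.
    rewrite Rmax_left; auto; apply IZR_le; lia.
Qed.

Lemma INR_ceilR_le x : 0 <= x -> INR (ceilR x) <= x + 1.
Proof.
  intros Hx; unfold ceilR; rewrite INR_Z_to_nat, opp_IZR.
  destruct (base_Int_part (- x)); apply Rmax_lub; lra.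
Qed.

Lemma INR_floorR_le x : 0 <= x -> INR (floorR x) <= x.
Proof.
  intros Hx; unfold floorR; rewrite INR_Z_to_nat.
  destruct (base_Int_part x); apply Rmax_lub; lra.
Qed.

Lemma INR_max_upto_le f T b :
  (forall t, (t <= T)%nat -> INR (f t) <= b) -> 0 <= b -> INR (max_upto f T) <= b.
Proof.
  intros Hf Hb; unfold max_upto.
  assert (Hl : forall t, In t (seq 0 (S T)) -> INR (f t) <= b)
    by (intros t Ht; apply in_seq in Ht; apply Hf; lia).
  induction (seq 0 (S T)) as [|x l IH]; simpl in *; [lra|].
  destruct (Nat.max_spec (f x) (fold_right Nat.max 0%nat (map f l)))
    as [[_ ->] | [_ ->]]; auto.
Qed.

Lemma eps_t_inv t : eps_t t = / 2 ^ t.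
Proof. unfold eps_t; rewrite pow_inv; reflexivity. Qed.

Lemma ln_le_compat x y : 0 < x -> x <= y -> ln x <= ln y.
Proof.
  intros Hx [Hxy | ->]; [left; apply ln_increasing; auto | lra].
Qed.

Lemma ln_le_inv x y : 0 < x -> 0 < y -> ln x <= ln y -> x <= y.
Proof.
  intros Hx Hy H; destruct (Rle_lt_dec x y) as [|Hyx]; auto.
  pose proof (ln_increasing y x Hy Hyx); lra.
Qed.

Lemma ln2_pos : 0 < ln 2.
Proof. pose proof ln_lt_2; lra. Qed.

Lemma lg_mul_ln2 x : lg x * ln 2 = ln x.
Proof. pose proof ln2_pos; unfold lg; field; lra. Qed.

Lemma lg_nonneg x : 1 <= x -> 0 <= lg x.
Proof.
  intros Hx; pose proof ln2_pos.
  assert (0 <= ln x) by (rewrite <- ln_1; apply ln_le_compat; lra).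
  pose proof (lg_mul_ln2 x); nra.
Qed.

Lemma lg_le_pow2_mul_pow X a b y :
  0 < X -> 0 < y -> X <= 2 ^ a * y ^ b -> lg X <= INR a + INR b * lg y.
Proof.
  intros HX Hy H; pose proof ln2_pos.
  assert (ln X <= INR a * ln 2 + INR b * ln y).
  { rewrite <- !ln_pow, <- ln_mult by (try apply pow_lt; lra).
    apply ln_le_compat; auto. }
  pose proof (lg_mul_ln2 X); pose proof (lg_mul_ln2 y); nra.
Qed.

Lemma pow2_le_of_le_lg m X : 0 < X -> INR m <= lg X -> 2 ^ m <= X.
Proof.
  intros HX Hm; pose proof ln2_pos.
  apply ln_le_inv; [apply pow_lt; lra | exact HX |].
  rewrite ln_pow, <- (lg_mul_ln2 X) by lra; nra.
Qed.

Lemma INR_log2_le_lg m X : INR m <= X -> 1 <= X -> INR (Nat.log2 m) <= lg X.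
Proof.
  intros Hm HX; pose proof ln2_pos.
  destruct m as [|m]; [apply lg_nonneg; exact HX |].
  destruct (Nat.log2_spec (S m)) as [Hpow _]; [lia |].
  apply le_INR in Hpow; rewrite pow_INR in Hpow; simpl INR in Hpow at 1.
  replace (1 + 1) with 2 in Hpow by lra.
  assert (Hln : ln (2 ^ Nat.log2 (S m)) <= ln X)
    by (apply ln_le_compat; [apply pow_lt |]; lra).
  rewrite ln_pow, <- (lg_mul_ln2 X) in Hln by lra; nra.
Qed.

Lemma INR_bst_cost_le m a b y :
  1 <= y -> INR m <= 2 ^ a * y ^ b -> INR (bst_cost m) <= INR a + INR b * lg y + 1.
Proof.
  intros Hy Hm; unfold bst_cost; rewrite plus_INR; simpl (INR 1).
  assert (1 <= 2 ^ a * y ^ b).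
  { rewrite <- (Rmult_1_l 1) at 1.
    apply Rmult_le_compat; try lra; apply pow_R1_Rle; lra. }
  pose proof (INR_log2_le_lg m _ Hm ltac:(lra)).
  pose proof (lg_le_pow2_mul_pow (2 ^ a * y ^ b) a b y ltac:(lra) ltac:(lra) (Rle_refl _)).
  lra.
Qed.

Definition walk_len_const (alpha : R) : R := 6 * ln 2 / ln (1 / (1 - alpha)) + 1.

Definition pagerank_const (alpha : R) : R :=
  4 * (11 + 1029 * (40 + 2 * walk_len_const alpha)) + 4116 * 24 + 4116.

Lemma pagerank_cost_arith T R P Z K B L N A :
  1 <= L -> 1 <= N -> 0 <= A ->
  0 <= T <= L + 2 -> 0 <= R <= 5 * N * L ^ 2 -> 0 <= P <= 1029 * N * L ^ 3 ->
  0 <= Z <= (40 + 2 * A) * L -> 0 <= K <= 4116 * N * L ^ 4 -> 0 <= B <= 23 * L ->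
  (T + 1) * (1 + (2 * R + P * Z)) + K * (1 + B) + K
  <= (4 * (11 + 1029 * (40 + 2 * A)) + 4116 * 24 + 4116) * N * L ^ 5.
Proof.
  intros HL HN HA [hT1 hT2] [hR1 hR2] [hP1 hP2] [hZ1 hZ2] [hK1 hK2] [hB1 hB2].
  set (M := 40 + 2 * A).
  assert (HL3 : 1 <= L ^ 3) by (simpl; nra).
  assert (HL4 : N * L ^ 2 <= N * L ^ 4) by (apply Rmult_le_compat_l; [lra|]; simpl; nra).
  assert (HL5 : N * L ^ 4 <= N * L ^ 5) by (apply Rmult_le_compat_l; [lra|]; simpl; nra).
  assert (HPZ : P * Z <= (1029 * N * L ^ 3) * (M * L)) by (apply Rmult_le_compat; auto).
  replace ((1029 * N * L ^ 3) * (M * L)) with (1029 * M * (N * L ^ 4)) in HPZ by (simpl; ring).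
  assert (E1 : 1 + (2 * R + P * Z) <= (11 + 1029 * M) * N * L ^ 4) by nra.
  assert (E2 : (T + 1) * (1 + (2 * R + P * Z)) <= (4 * L) * ((11 + 1029 * M) * N * L ^ 4)).
  { apply Rmult_le_compat; nra. }
  assert (E3 : K * (1 + B) <= (4116 * N * L ^ 4) * (24 * L)) by (apply Rmult_le_compat; lra).
  replace ((4 * L) * ((11 + 1029 * M) * N * L ^ 4))
    with (4 * (11 + 1029 * M) * (N * L ^ 5)) in E2 by (simpl; ring).
  replace ((4116 * N * L ^ 4) * (24 * L)) with (4116 * 24 * (N * L ^ 5)) in E3 by (simpl; ring).
  unfold M in *; nra.
Qed.

Section Estimates.
Variables (alpha : R) (n : nat) (Delta : R).
Hypothesis alpha_range : 0 < alpha < 1.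
Hypothesis n_ge2 : (2 <= n)%nat.
Hypothesis Delta_range : 1 <= Delta <= INR n.

Let N := INR n / Delta.
Let L := lg (INR n).
Let T := last_scale n Delta.
Let A := walk_len_const alpha.

Lemma INR_n_ge2 : 2 <= INR n.
Proof. apply le_INR in n_ge2; simpl in n_ge2; lra. Qed.

Lemma L_range : 1 <= L <= 2 * INR n.
Proof.
  pose proof INR_n_ge2; pose proof ln2_pos; pose proof ln_lt_2.
  pose proof (lg_mul_ln2 (INR n)) as HL; fold L in HL.
  assert (ln 2 <= ln (INR n)) by (apply ln_le_compat; lra).
  assert (ln (INR n) <= INR n - 1).
  { pose proof (exp_ineq1_le (ln (INR n))); rewrite exp_ln in * by lra; lra. }
  split; nra.
Qed.

Lemma N_range : 1 <= N <= INR n.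
Proof.
  pose proof INR_n_ge2; unfold N; split.
  - apply Rmult_le_reg_r with Delta; [lra|]; field_simplify; lra.
  - apply Rmult_le_reg_r with Delta; [lra|]; field_simplify; nra.
Qed.

Lemma N_mul_L_pow_le a b : (a <= b)%nat -> N * L ^ a <= N * L ^ b.
Proof.
  intros Hab; pose proof L_range; pose proof N_range.
  apply Rmult_le_compat_l; [lra | apply Rle_pow; [lra | exact Hab]].
Qed.

Lemma one_le_N_mul_L_pow a : 1 <= N * L ^ a.
Proof.
  pose proof L_range; pose proof N_range.
  assert (1 <= L ^ a) by (apply pow_R1_Rle; lra); nra.
Qed.

Lemma last_scale_le_lg : INR T <= lg (4 * N).
Proof.
  pose proof N_range; unfold T, last_scale.
  replace (4 * INR n / Delta) with (4 * N) by (unfold N; field; lra).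
  apply INR_floorR_le, lg_nonneg; lra.
Qed.

Lemma last_scale_le : INR T <= L + 2.
Proof.
  pose proof N_range; pose proof INR_n_ge2; pose proof last_scale_le_lg.
  assert (lg (4 * N) <= INR 2 + INR 1 * L)
    by (apply lg_le_pow2_mul_pow; simpl; lra).
  simpl INR in *; lra.
Qed.

Lemma pow2_scale_range t : (t <= T)%nat -> 1 <= 2 ^ t <= 4 * N.
Proof.
  intros Ht; pose proof N_range; split; [apply pow_R1_Rle; lra|].
  apply Rle_trans with (2 ^ T); [apply Rle_pow; [lra | exact Ht]|].
  apply pow2_le_of_le_lg; [lra | exact last_scale_le_lg].
Qed.

Lemma reps_at_le t :
  (t <= T)%nat -> INR (reps_at n Delta t) <= 4 * / 2 ^ t * N * L ^ 2 + 1.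
Proof.
  intros Ht; destruct (pow2_scale_range t Ht); pose proof L_range; pose proof N_range.
  unfold reps_at; rewrite eps_t_inv; fold N L.
  apply INR_ceilR_le.
  assert (0 < / 2 ^ t) by (apply Rinv_0_lt_compat; lra).
  assert (0 <= / 2 ^ t * (N * L ^ 2)) by (apply Rmult_le_pos; nra).
  nra.
Qed.

Lemma walks_at_le t : INR (walks_at n t) <= 128 * L * 2 ^ t + 1.
Proof.
  pose proof L_range; assert (0 < 2 ^ t) by (apply pow_lt; lra).
  unfold walks_at; rewrite eps_t_inv; fold L.
  replace (16 * L / (/ 2 ^ t / 2 * (1 / 2) ^ 2)) with (128 * L * 2 ^ t) by (field; lra).
  apply INR_ceilR_le; nra.
Qed.

Lemma reps_at_le_poly t : (t <= T)%nat -> INR (reps_at n Delta t) <= 5 * N * L ^ 2.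
Proof.
  intros Ht; destruct (pow2_scale_range t Ht); pose proof L_range; pose proof N_range.
  pose proof (reps_at_le t Ht).
  assert (/ 2 ^ t <= 1) by (rewrite <- Rinv_1; apply Rinv_le_contravar; lra).
  assert (0 < / 2 ^ t) by (apply Rinv_0_lt_compat; lra).
  pose proof (one_le_N_mul_L_pow 2).
  assert (/ 2 ^ t * (N * L ^ 2) <= N * L ^ 2) by nra.
  lra.
Qed.

Lemma walks_at_le_poly t : (t <= T)%nat -> INR (walks_at n t) <= 513 * N * L.
Proof.
  intros Ht; destruct (pow2_scale_range t Ht); pose proof L_range; pose proof N_range.
  pose proof (walks_at_le t); nra.
Qed.

(** The factors [2^-t] of the repetition count and [2^t] of the number of
    walks cancel, so the work per scale does not depend on [t]. *)
Lemma reps_walks_le t :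
  (t <= T)%nat -> INR (reps_at n Delta t * walks_at n t) <= 1029 * N * L ^ 3.
Proof.
  intros Ht; destruct (pow2_scale_range t Ht); pose proof L_range; pose proof N_range.
  rewrite mult_INR.
  assert (Hprod : INR (reps_at n Delta t) * INR (walks_at n t)
                  <= (4 * / 2 ^ t * N * L ^ 2 + 1) * (128 * L * 2 ^ t + 1))
    by (apply Rmult_le_compat; auto using pos_INR, reps_at_le, walks_at_le).
  assert (Hinv : / 2 ^ t * 2 ^ t = 1) by (field; lra).
  assert (/ 2 ^ t <= 1) by (rewrite <- Rinv_1; apply Rinv_le_contravar; lra).
  assert (0 < / 2 ^ t) by (apply Rinv_0_lt_compat; lra).
  replace ((4 * / 2 ^ t * N * L ^ 2 + 1) * (128 * L * 2 ^ t + 1)) with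
    (512 * (N * L ^ 3) * (/ 2 ^ t * 2 ^ t) + 4 * / 2 ^ t * (N * L ^ 2)
     + 128 * L * 2 ^ t + 1) in Hprod by (simpl; ring).
  rewrite Hinv in Hprod.
  pose proof (N_mul_L_pow_le 2 3 ltac:(lia)).
  pose proof (N_mul_L_pow_le 1 3 ltac:(lia)); rewrite pow_1 in *.
  assert (L * 2 ^ t <= L * (4 * N)) by (apply Rmult_le_compat_l; lra).
  nra.
Qed.

Lemma ln_inv_one_sub_pos : 0 < ln (1 / (1 - alpha)).
Proof.
  rewrite <- ln_1; apply ln_increasing; [lra|].
  apply Rmult_lt_reg_r with (1 - alpha); [lra|]; field_simplify; lra.
Qed.

Lemma walk_len_const_nonneg : 0 <= A.
Proof.
  pose proof ln_inv_one_sub_pos; pose proof ln2_pos.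
  assert (0 < 6 * ln 2 / ln (1 / (1 - alpha))) by (apply Rdiv_lt_0_compat; lra).
  unfold A, walk_len_const; lra.
Qed.

Lemma walk_len_at_le t : (t <= T)%nat -> INR (walk_len_at alpha t) <= A * L.
Proof.
  intros Ht; destruct (pow2_scale_range t Ht); pose proof L_range; pose proof N_range.
  pose proof INR_n_ge2; pose proof ln2_pos.
  set (la := ln (1 / (1 - alpha))); pose proof ln_inv_one_sub_pos as Hla; fold la in Hla.
  unfold walk_len_at; rewrite eps_t_inv; fold la.
  replace (4 / (/ 2 ^ t / 2)) with (8 * 2 ^ t) by (field; lra).
  assert (Hlg : lg (8 * 2 ^ t) <= INR 5 + INR 1 * L)
    by (apply lg_le_pow2_mul_pow; simpl; lra).
  simpl INR in Hlg.
  assert (Hln : 0 <= ln (8 * 2 ^ t) <= (5 + L) * ln 2).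
  { rewrite <- lg_mul_ln2; pose proof (lg_nonneg (8 * 2 ^ t) ltac:(lra)); split; nra. }
  assert (Hq : 0 < ln 2 / la) by (apply Rdiv_lt_0_compat; lra).
  assert (Hdiv : ln (8 * 2 ^ t) / la <= (5 + L) * (ln 2 / la)).
  { unfold Rdiv; rewrite <- Rmult_assoc.
    apply Rmult_le_compat_r; [left; apply Rinv_0_lt_compat |]; lra. }
  eapply Rle_trans; [apply INR_ceilR_le; unfold Rdiv; apply Rmult_le_pos;
                     [lra | left; apply Rinv_0_lt_compat; lra]|].
  unfold A, walk_len_const; fold la.
  replace (6 * ln 2 / la) with (6 * (ln 2 / la)) by (field; lra).
  nra.
Qed.

Lemma max_reps_walks_le :
  INR (max_upto (fun t => reps_at n Delta t * walks_at n t)%nat T) <= 1029 * N * L ^ 3.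
Proof.
  apply INR_max_upto_le; [exact reps_walks_le|].
  pose proof (one_le_N_mul_L_pow 3); lra.
Qed.

Lemma chunk_bound_le : INR (chunk_bound n Delta) <= 4116 * N * L ^ 4.
Proof.
  pose proof L_range; pose proof last_scale_le; pose proof max_reps_walks_le.
  unfold chunk_bound; fold T; rewrite mult_INR, S_INR.
  apply Rle_trans with ((4 * L) * (1029 * N * L ^ 3));
    [apply Rmult_le_compat; auto using pos_INR; pose proof (pos_INR T); lra |].
  simpl; lra.
Qed.

Lemma bst_cost_chunk_bound_le : INR (bst_cost (chunk_bound n Delta)) <= 23 * L.
Proof.
  pose proof L_range; pose proof N_range; pose proof INR_n_ge2.
  assert (Hpoly : INR (chunk_bound n Delta) <= 2 ^ 17 * INR n ^ 5).
  { assert (HL4 : L ^ 4 <= 16 * INR n ^ 4).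
    { replace (16 * INR n ^ 4) with ((2 * INR n) ^ 4) by ring.
      apply pow_incr; lra. }
    assert (N * L ^ 4 <= INR n * (16 * INR n ^ 4))
      by (apply Rmult_le_compat; [lra | apply pow_le; lra | lra | exact HL4]).
    assert (0 <= INR n ^ 5) by (apply pow_le; lra).
    pose proof chunk_bound_le; simpl pow at 1; lra. }
  pose proof (INR_bst_cost_le _ 17 5 (INR n) ltac:(lra) Hpoly) as Hc.
  simpl INR in Hc; fold L in Hc; lra.
Qed.

Lemma step_cost_le : INR (step_cost alpha n Delta) <= (40 + 2 * A) * L.
Proof.
  pose proof L_range; pose proof N_range; pose proof INR_n_ge2.
  assert (HLL : INR (max_upto (walk_len_at alpha) T) <= A * L).
  { apply INR_max_upto_le; [exact walk_len_at_le|].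
    pose proof walk_len_const_nonneg; nra. }
  assert (HR : INR (bst_cost (max_upto (walks_at n) T)) <= 14 * L).
  { assert (Hpoly : INR (max_upto (walks_at n) T) <= 2 ^ 11 * INR n ^ 2).
    { apply Rle_trans with (513 * N * L);
        [apply INR_max_upto_le; [exact walks_at_le_poly | nra] | simpl; nra]. }
    pose proof (INR_bst_cost_le _ 11 2 (INR n) ltac:(lra) Hpoly) as Hc.
    simpl INR in Hc; fold L in Hc; lra. }
  pose proof bst_cost_chunk_bound_le.
  unfold step_cost; fold T; rewrite !plus_INR, mult_INR; simpl (INR 3); simpl (INR 2).
  nra.
Qed.

Lemma pagerank_cost_le :
  INR (pagerank_cost alpha n Delta) <= pagerank_const alpha * N * L ^ 5.
Proof.
  pose proof L_range; pose proof N_range.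
  assert (Hreps : INR (max_upto (reps_at n Delta) T) <= 5 * N * L ^ 2).
  { apply INR_max_upto_le; [exact reps_at_le_poly|].
    pose proof (one_le_N_mul_L_pow 2); lra. }
  pose proof (pagerank_cost_arith (INR T) _ _ _ _ _ L N A
    ltac:(lra) ltac:(lra) walk_len_const_nonneg
    (conj (pos_INR _) last_scale_le) (conj (pos_INR _) Hreps)
    (conj (pos_INR _) max_reps_walks_le) (conj (pos_INR _) step_cost_le)
    (conj (pos_INR _) chunk_bound_le) (conj (pos_INR _) bst_cost_chunk_bound_le)) as Harith.
  unfold pagerank_cost, pagerank_const; cbv zeta; fold T A.
  repeat rewrite ?plus_INR, ?mult_INR, ?S_INR; simpl (INR 0).
  lra.
Qed.
End Estimates.

Theorem theorem1 :
  exists k : nat, forall alpha : R, 0 < alpha < 1 ->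
  exists C : R, forall (n : nat) (adj : nat -> nat -> Prop) (Delta : R),
    (2 <= n)%nat ->
    (forall v u, adj v u -> (v < n)%nat /\ (u < n)%nat) ->
    (forall v, (v < n)%nat -> exists u, adj v u) ->
    1 <= Delta <= INR n ->
    forall (c : nat) (out : list (nat * R)),
      exec n adj (approximate_pagerank alpha n Delta) c out ->
      INR c <= C * (INR n / Delta) * (lg (INR n)) ^ k.
Proof.
  exists 5%nat; intros alpha Halpha; exists (pagerank_const alpha).
  intros n adj Delta Hn _ _ HDelta c out Hexec.
  apply Rle_trans with (INR (pagerank_cost alpha n Delta)).
  - apply le_INR; exact (pagerank_cost_correct n adj alpha Delta c out Hexec).
  - exact (pagerank_cost_le alpha n Delta Halpha Hn HDelta).
Qed.
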